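(* Let $a>0$, $\alpha\in[0,1)$ and $f\in\mathcal C_a$. The function $\mathrm{Sh}_\alpha(f)$ is differentiable on $(-\infty,s_\alpha)$ and $\mathrm{Sh}_\alpha(f)'(x)<\alpha$ for every $x\in(-\infty,s_\alpha)$.
   Context: $\mathcal C_a$ is the set of $C^1$ functions $f:\mathbb R\to\mathbb R$ that are even, satisfy $f(s)=|s|$ for $|s|\ge a$ and are strictly convex on $[-a,a]$. For $f\in\mathcal C_a$: $F_\alpha(s)=f(s)-\alpha s$, $x_\alpha^+=(f')^{-1}(\alpha)\in[0,a)$ (inverse of $f':[-a,a]\to[-1,1]$); $F_\alpha$ decreases on $(-\infty,x_\alpha^+]$ and increases on $[x_\alpha^+,\infty)$. Let $F_\alpha^{-1}$ be the inverse of $F_\alpha|_{[x_\alpha^+,\infty)}$, $\phi=F_\alpha^{-1}\circ F_\alpha$, $\delta_x=(1-\alpha)^{-1}F_\alpha(x)-\phi(x)$, $s_\alpha=x_\alpha^++\delta_{x_\alpha^+}$; $x\mapsto x+\delta_x$ is an increasing bijection $(-\infty,x_\alpha^+]\to(-\infty,s_\alpha]$ with inverse $\tau$. Define $\mathrm{Sh}_\alpha(f)(x)=\alpha x+F_\alpha(\tau(x))$ for $x\le s_\alpha$ and $=x$ for $x>s_\alpha$. *)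

From Stdlib Require Import Reals Lra ClassicalEpsilon.
From Coquelicot Require Import Coquelicot.
Open Scope R_scope.

Definition C1 (f : R -> R) : Prop :=
  (forall x, ex_derive f x) /\ (forall x, continuous (Derive f) x).

Definition strictly_convex_on (f : R -> R) (lo hi : R) : Prop :=
  forall x y t, lo <= x <= hi -> lo <= y <= hi -> x <> y -> 0 < t < 1 ->
    f (t * x + (1 - t) * y) < t * f x + (1 - t) * f y.

Definition in_Ca (a : R) (f : R -> R) : Prop :=
  C1 f /\ (forall s, f (- s) = f s) /\
  (forall s, a <= Rabs s -> f s = Rabs s) /\
  strictly_convex_on f (- a) a.

Definition Falpha (f : R -> R) (alpha : R) (s : R) : R := f s - alpha * s.

Definition xplus (a : R) (f : R -> R) (alpha : R) : R :=
  epsilon (inhabits 0) (fun x => - a <= x <= a /\ Derive f x = alpha).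

Definition Finv (a : R) (f : R -> R) (alpha : R) (y : R) : R :=
  epsilon (inhabits 0)
    (fun z => xplus a f alpha <= z /\ Falpha f alpha z = y).

Definition phi (a : R) (f : R -> R) (alpha : R) (x : R) : R :=
  Finv a f alpha (Falpha f alpha x).

Definition delta (a : R) (f : R -> R) (alpha : R) (x : R) : R :=
  / (1 - alpha) * Falpha f alpha x - phi a f alpha x.

Definition s_alpha (a : R) (f : R -> R) (alpha : R) : R :=
  xplus a f alpha + delta a f alpha (xplus a f alpha).

Definition tau (a : R) (f : R -> R) (alpha : R) (y : R) : R :=
  epsilon (inhabits 0)
    (fun x => x <= xplus a f alpha /\ x + delta a f alpha x = y).

Definition Sh (a : R) (f : R -> R) (alpha : R) (x : R) : R :=
  if Rle_dec x (s_alpha a f alpha)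
  then alpha * x + Falpha f alpha (tau a f alpha x)
  else x.

From Stdlib Require Import Reals Lra ClassicalEpsilon.
From Coquelicot Require Import Coquelicot.
Open Scope R_scope.

(* Below s_alpha, Sh_alpha(f) x = alpha x + F_alpha (tau x), where tau inverts
   G t = t + delta_t (called [shift] below) on (-oo, x_alpha^+).  By the chain
   rule and the inverse function rule, Sh_alpha(f)' x = alpha + F_alpha'(tau x)
   / G'(tau x).  Strict convexity makes f' strictly increasing, so
   F_alpha' = f' - alpha is negative left of x_alpha^+, while differentiating
   F_alpha (phi t) = F_alpha t gives
   G' t = 1 + F_alpha' t / (1 - alpha) - F_alpha' t / F_alpha' (phi t) >= 1,
   because 0 < F_alpha' (phi t) <= 1 - alpha.  G maps (-oo, x_alpha^+) onto
   (-oo, s_alpha) since G t = t for t <= -a and G t -> s_alpha as t -> x_alpha^+. *)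

Lemma continuous_eq_of_within (g : R -> R) (D : R -> Prop) x c :
  ProperFilter (within D (locally x)) -> continuous g x ->
  (forall y, D y -> g y = c) -> g x = c.
Proof.
  intros HD Hg Hc.
  apply (filterlim_locally_unique (F := within D (locally x)) g).
  - apply (filterlim_filter_le_1 _ (filter_le_within D) Hg).
  - apply (filterlim_ext_loc (fun _ => c)); [|apply filterlim_const].
    unfold within. apply filter_forall. intros y Hy. now rewrite Hc.
Qed.

Lemma is_derive_le_of_chords (g : R -> R) x k d c : is_derive g x d ->
  (forall t, 0 < t < 1 -> g (x + t * k) - g x <= t * c) -> d * k <= c.
Proof.
  intros Hd Hchord.
  assert (Hline : is_derive (fun t => g (x + t * k)) 0 (k * d)).
  { apply (is_derive_comp g (fun t => x + t * k)).
    - now rewrite Rmult_0_l, Rplus_0_r.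
    - auto_derive; [easy | ring]. }
  apply is_derive_Reals in Hline.
  apply Rnot_lt_le; intros Hlt.
  destruct (Hline (d * k - c) ltac:(lra)) as [del Hdel].
  set (t := Rmin del 1 / 2).
  assert (Ht : 0 < t <= 1 / 2).
  { pose proof (Rmin_pos del 1 (cond_pos del) Rlt_0_1); pose proof (Rmin_r del 1).
    unfold t; lra. }
  assert (Htdel : Rabs t < del).
  { rewrite Rabs_pos_eq by lra.
    pose proof (Rmin_l del 1); pose proof (cond_pos del). unfold t; lra. }
  specialize (Hdel t ltac:(lra) Htdel).
  rewrite Rplus_0_l, Rmult_0_l, Rplus_0_r in Hdel.
  apply Rabs_def2 in Hdel as [_ Hq].
  specialize (Hchord t ltac:(lra)).
  assert (Hq' : (g (x + t * k) - g x) / t <= c).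
  { apply Rmult_le_reg_r with t; [lra|]. unfold Rdiv. rewrite Rmult_assoc, Rinv_l by lra. lra. }
  lra.
Qed.

Lemma le_of_increasing_on (P : R -> Prop) (g : R -> R) x z :
  (forall u v, P u -> P v -> u < v -> g u < g v) ->
  P x -> P z -> g x <= g z -> x <= z.
Proof.
  intros Hg Hx Hz Hle. apply Rnot_lt_le; intros Hlt.
  specialize (Hg z x Hz Hx Hlt). lra.
Qed.

Lemma increasing_of_is_derive_pos (g dg : R -> R) x y : x < y ->
  (forall t, x <= t <= y -> is_derive g t (dg t)) ->
  (forall t, x < t < y -> 0 < dg t) -> g x < g y.
Proof.
  intros Hxy Hd Hpos.
  destruct (MVT_cor2 g dg x y Hxy) as [c [Hmvt Hc]].
  - intros t Ht. apply is_derive_Reals, Hd, Ht.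
  - specialize (Hpos c Hc). nra.
Qed.

Lemma is_derive_increasing_inverse (g h : R -> R) (lb ub y l : R) :
  lb < ub ->
  (forall u v, lb <= u <= ub -> lb <= v <= ub -> u < v -> g u < g v) ->
  (forall u, lb <= u <= ub -> ex_derive g u) ->
  (forall z, g lb <= z <= g ub -> lb <= h z <= ub /\ g (h z) = z) ->
  g lb < y < g ub -> is_derive g (h y) l -> l <> 0 ->
  is_derive h y (/ l).
Proof.
  intros Hlu Hincr Hder Hinv Hy Hl Hl0.
  assert (Hcont : forall u, lb <= u <= ub -> continuity_pt g u).
  { intros u Hu. apply continuity_pt_filterlim.
    apply (ex_derive_continuous (K := R_AbsRing) (V := R_NormedModule)), Hder, Hu. }
  assert (Hrange : forall z, g lb <= z <= g ub -> lb <= h z <= ub) by apply Hinv.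
  assert (Hmono : forall z w, g lb <= z <= g ub -> g lb <= w <= g ub -> z <= w -> h z <= h w).
  { intros z w Hz Hw Hzw.
    apply (le_of_increasing_on (fun u => lb <= u <= ub) g); auto.
    now rewrite (proj2 (Hinv z Hz)), (proj2 (Hinv w Hw)). }
  assert (Hglb : g lb <= g ub) by (apply Rlt_le, Hincr; lra).
  assert (Hhy : h (g lb) <= h y <= h (g ub)) by (split; apply Hmono; lra).
  assert (Prf : forall u, h (g lb) <= u <= h (g ub) -> derivable_pt g u).
  { intros u Hu. apply ex_derive_Reals_0, Hder.
    pose proof (Hrange (g lb) ltac:(lra)); pose proof (Hrange (g ub) ltac:(lra)). lra. }
  assert (Hhcont : continuity_pt h y).
  { apply (Ranalysis5.continuity_pt_recip_interv g h lb ub);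
      [exact Hlu | | | | exact Hcont | exact Hy].
    - intros u v Hu Huv Hv. apply Hincr; lra.
    - intros z Hz1 Hz2. exact (proj2 (Hinv z (conj Hz1 Hz2))).
    - intros z Hz1 Hz2. exact (proj1 (Hinv z (conj Hz1 Hz2))). }
  pose proof (Ranalysis5.derivable_pt_lim_recip_interv g h (g lb) (g ub) y Prf
    Hhcont ltac:(lra) Hy Hhy (fun z Hz => proj2 (Hinv z Hz))) as Hrecip.
  rewrite (derive_pt_eq_0 _ _ _ _ (proj1 (is_derive_Reals _ _ _) Hl)) in Hrecip.
  apply is_derive_Reals. unfold Rdiv in Hrecip. rewrite Rmult_1_l in Hrecip. now apply Hrecip.
Qed.

Section ClassCa.

Variables (a : R) (f : R -> R).
Hypotheses (Ha : 0 < a) (Hf : in_Ca a f).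

Lemma ex_derive_Ca t : ex_derive f t.
Proof. apply Hf. Qed.

Lemma continuous_Derive_Ca t : continuous (Derive f) t.
Proof. apply Hf. Qed.

Lemma is_derive_Ca_gt t : a < t -> is_derive f t 1.
Proof.
  intros Ht. destruct Hf as [_ [_ [Habs _]]].
  apply (is_derive_ext_loc (fun u => u)).
  - apply (filter_imp (fun u => a < u)); [|exact (open_gt a t Ht)].
    intros u Hu. rewrite Habs; rewrite Rabs_pos_eq; lra.
  - auto_derive; [easy | ring].
Qed.

Lemma is_derive_Ca_lt t : t < - a -> is_derive f t (-1).
Proof.
  intros Ht. destruct Hf as [_ [_ [Habs _]]].
  apply (is_derive_ext_loc (fun u => - u)).
  - apply (filter_imp (fun u => u < - a)); [|exact (open_lt (- a) t Ht)].
    intros u Hu. rewrite Habs; rewrite Rabs_left; lra.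
  - auto_derive; [easy | ring].
Qed.

Lemma Derive_Ca_a : Derive f a = 1.
Proof.
  apply (continuous_eq_of_within _ (fun u => a < u)).
  - apply at_right_proper_filter.
  - apply continuous_Derive_Ca.
  - intros u Hu. now apply is_derive_unique, is_derive_Ca_gt.
Qed.

Lemma Derive_Ca_opp_a : Derive f (- a) = -1.
Proof.
  apply (continuous_eq_of_within _ (fun u => u < - a)).
  - apply at_left_proper_filter.
  - apply continuous_Derive_Ca.
  - intros u Hu. now apply is_derive_unique, is_derive_Ca_lt.
Qed.

Lemma Derive_Ca_increasing x y : - a <= x -> x < y -> y <= a -> Derive f x < Derive f y.
Proof.
  intros Hx Hxy Hy. destruct Hf as [_ [_ [_ Hconv]]].
  set (m := (x + y) / 2).
  assert (Hmid : f m < (f x + f y) / 2).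
  { replace m with (/ 2 * x + (1 - / 2) * y) by (unfold m; field).
    specialize (Hconv x y (/ 2) ltac:(lra) ltac:(lra) ltac:(lra) ltac:(lra)). lra. }
  assert (Htangent : forall u, - a <= u <= a -> u <> m ->
    Derive f u * (m - u) <= f m - f u).
  { intros u Hu Hum. apply (is_derive_le_of_chords f u); [apply Derive_correct, ex_derive_Ca|].
    intros t Ht. replace (u + t * (m - u)) with (t * m + (1 - t) * u) by ring.
    specialize (Hconv m u t ltac:(unfold m; lra) Hu (not_eq_sym Hum) Ht). lra. }
  pose proof (Htangent x ltac:(lra) ltac:(unfold m; lra)).
  pose proof (Htangent y ltac:(lra) ltac:(unfold m; lra)).
  unfold m in *. nra.
Qed.

Lemma Derive_Ca_le_1 t : Derive f t <= 1.
Proof.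
  destruct (Rlt_le_dec a t) as [Hat | Hta].
  - rewrite (is_derive_unique _ _ _ (is_derive_Ca_gt t Hat)). lra.
  destruct (Rlt_le_dec t (- a)) as [Hta' | Hat'].
  - rewrite (is_derive_unique _ _ _ (is_derive_Ca_lt t Hta')). lra.
  - rewrite <- Derive_Ca_a. destruct (Req_dec t a) as [-> | Hne]; [lra|].
    apply Rlt_le, Derive_Ca_increasing; lra.
Qed.

Section Shadow.

Variable alpha : R.
Hypothesis Halpha : 0 <= alpha < 1.

Local Notation F := (Falpha f alpha).
Local Notation xp := (xplus a f alpha).

Lemma xplus_spec : - a <= xp <= a /\ Derive f xp = alpha.
Proof.
  unfold xplus. apply epsilon_spec.
  destruct (IVT_gen_consistent (Derive f) (- a) a alpha continuous_Derive_Ca) as [x [Hx Hdx]].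
  - rewrite Derive_Ca_a, Derive_Ca_opp_a, Rmin_left, Rmax_right; lra.
  - rewrite Rmin_left, Rmax_right in Hx by lra. now exists x.
Qed.

Lemma Derive_lt_alpha t : t < xp -> Derive f t < alpha.
Proof.
  intros Ht. destruct xplus_spec as [Hxp Hdxp].
  destruct (Rlt_le_dec t (- a)) as [Hta | Hat].
  - rewrite (is_derive_unique _ _ _ (is_derive_Ca_lt t Hta)). lra.
  - rewrite <- Hdxp. apply Derive_Ca_increasing; lra.
Qed.

Lemma Derive_gt_alpha t : xp < t -> alpha < Derive f t.
Proof.
  intros Ht. destruct xplus_spec as [Hxp Hdxp].
  destruct (Rlt_le_dec a t) as [Hat | Hta].
  - rewrite (is_derive_unique _ _ _ (is_derive_Ca_gt t Hat)). lra.
  - rewrite <- Hdxp. apply Derive_Ca_increasing; lra.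
Qed.

Lemma is_derive_Falpha t : is_derive F t (Derive f t - alpha).
Proof.
  unfold Falpha. auto_derive; [apply ex_derive_Ca | now rewrite Rmult_1_l, Rmult_1_r].
Qed.

Lemma continuous_Falpha t : continuous F t.
Proof.
  apply (ex_derive_continuous (K := R_AbsRing) (V := R_NormedModule)).
  eexists. apply is_derive_Falpha.
Qed.

Lemma Falpha_increasing x y : xp <= x -> x < y -> F x < F y.
Proof.
  intros Hx Hxy.
  apply (increasing_of_is_derive_pos _ (fun t => Derive f t - alpha)); [exact Hxy | |].
  - intros t _. apply is_derive_Falpha.
  - intros t Ht. pose proof (Derive_gt_alpha t ltac:(lra)). lra.
Qed.

Lemma Falpha_decreasing x y : x < y -> y <= xp -> F y < F x.
Proof.
  intros Hxy Hy.
  enough (- F x < - F y) by lra.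
  apply (increasing_of_is_derive_pos (fun t => - F t) (fun t => - (Derive f t - alpha)));
    [exact Hxy | |].
  - intros t _. apply (is_derive_opp F), is_derive_Falpha.
  - intros t Ht. pose proof (Derive_lt_alpha t ltac:(lra)). lra.
Qed.

Lemma Falpha_ge_a s : a <= s -> F s = (1 - alpha) * s.
Proof.
  intros Hs. destruct Hf as [_ [_ [Habs _]]]. unfold Falpha.
  rewrite Habs; rewrite Rabs_pos_eq; lra.
Qed.

Lemma Falpha_le_opp_a s : s <= - a -> F s = - (1 + alpha) * s.
Proof.
  intros Hs. destruct Hf as [_ [_ [Habs _]]]. unfold Falpha.
  rewrite Habs; rewrite Rabs_left; lra.
Qed.

Lemma Finv_spec y : F xp <= y -> xp <= Finv a f alpha y /\ F (Finv a f alpha y) = y.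
Proof.
  intros Hy. unfold Finv. apply epsilon_spec.
  destruct xplus_spec as [Hxp _].
  set (M := a + Rabs y / (1 - alpha)).
  assert (HM : a <= M).
  { assert (0 <= Rabs y / (1 - alpha)) by (apply Rdiv_le_0_compat; [apply Rabs_pos | lra]).
    unfold M; lra. }
  assert (HFM : y <= F M).
  { rewrite Falpha_ge_a by exact HM. unfold M.
    replace ((1 - alpha) * (a + Rabs y / (1 - alpha))) with ((1 - alpha) * a + Rabs y)
      by (field; lra).
    pose proof (Rle_abs y). nra. }
  destruct (IVT_gen_consistent F xp M y continuous_Falpha) as [z [Hz HFz]].
  - assert (F xp <= F M) by lra.
    rewrite Rmin_left, Rmax_right by assumption. lra.
  - rewrite Rmin_left in Hz by lra. exists z. split; [lra | exact HFz].
Qed.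

Lemma Finv_Falpha z : xp <= z -> Finv a f alpha (F z) = z.
Proof.
  intros Hz.
  assert (HFz : F xp <= F z).
  { destruct Hz as [Hz | <-]; [left; apply Falpha_increasing | right]; lra. }
  destruct (Finv_spec (F z) HFz) as [Hw HFw].
  assert (Hincr : forall u v, xp <= u -> xp <= v -> u < v -> F u < F v)
    by (intros u v Hu _ Huv; now apply Falpha_increasing).
  apply Rle_antisym; apply (le_of_increasing_on (fun u => xp <= u) F); auto; lra.
Qed.

Lemma phi_spec t : t < xp -> xp < phi a f alpha t /\ F (phi a f alpha t) = F t.
Proof.
  intros Ht.
  assert (HFt : F xp < F t) by (apply Falpha_decreasing; lra).
  destruct (Finv_spec (F t)) as [Hp HFp]; [lra |].
  split; [| exact HFp].
  destruct Hp as [Hp | Hp]; [exact Hp |].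
  unfold phi in HFp. rewrite <- Hp in HFp. lra.
Qed.

Lemma phi_xplus : phi a f alpha xp = xp.
Proof. apply Finv_Falpha, Rle_refl. Qed.

Lemma phi_le_opp_a t : t <= - a -> phi a f alpha t = / (1 - alpha) * F t.
Proof.
  intros Ht. destruct xplus_spec as [Hxp _].
  set (z := / (1 - alpha) * F t).
  assert (HFt : F t = (1 - alpha) * z) by (unfold z; field; lra).
  assert (Hz : a <= z).
  { apply (Rmult_le_reg_l (1 - alpha)); [lra |].
    rewrite <- HFt, Falpha_le_opp_a by exact Ht. nra. }
  unfold phi. rewrite HFt, <- (Falpha_ge_a z Hz).
  apply Finv_Falpha. lra.
Qed.

Lemma phi_lt t z : t < xp -> xp <= z -> F t < F z -> phi a f alpha t < z.
Proof.
  intros Ht Hz HFtz. destruct (phi_spec t Ht) as [Hp HFp].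
  apply Rnot_le_lt. intros Hzp.
  destruct Hzp as [Hzp | Heq]; [| rewrite <- Heq in HFp; lra].
  pose proof (Falpha_increasing z (phi a f alpha t) Hz Hzp). lra.
Qed.

Lemma is_derive_Finv y : F xp < y ->
  is_derive (Finv a f alpha) y (/ (Derive f (Finv a f alpha y) - alpha)).
Proof.
  intros Hy.
  destruct (Finv_spec y (Rlt_le _ _ Hy)) as [Hz HFz].
  set (z := Finv a f alpha y) in *.
  assert (Hzx : xp < z) by (destruct Hz as [Hz | Hz]; [exact Hz | rewrite <- Hz in HFz; lra]).
  assert (Hincr : forall u v, xp <= u -> xp <= v -> u < v -> F u < F v)
    by (intros u v Hu _ Huv; now apply Falpha_increasing).
  apply (is_derive_increasing_inverse F (Finv a f alpha) xp (z + 1)).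
  - lra.
  - intros u v Hu Hv Huv. apply Falpha_increasing; lra.
  - intros u _. eexists. apply is_derive_Falpha.
  - intros w Hw. destruct (Finv_spec w ltac:(lra)) as [Hw1 Hw2].
    repeat split; [exact Hw1 | | exact Hw2].
    apply (le_of_increasing_on (fun u => xp <= u) F); auto; lra.
  - pose proof (Falpha_increasing z (z + 1) ltac:(lra) ltac:(lra)). lra.
  - apply is_derive_Falpha.
  - pose proof (Derive_gt_alpha z Hzx). lra.
Qed.

Lemma is_derive_phi t : t < xp ->
  is_derive (phi a f alpha) t ((Derive f t - alpha) / (Derive f (phi a f alpha t) - alpha)).
Proof.
  intros Ht.
  assert (HFt : F xp < F t) by (apply Falpha_decreasing; lra).
  exact (is_derive_comp (Finv a f alpha) F t _ _ (is_derive_Finv _ HFt) (is_derive_Falpha t)).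
Qed.

Definition shift t := t + delta a f alpha t.

Definition shift_slope t := 1 + (/ (1 - alpha) * (Derive f t - alpha)
  - (Derive f t - alpha) / (Derive f (phi a f alpha t) - alpha)).

Lemma is_derive_shift t : t < xp -> is_derive shift t (shift_slope t).
Proof.
  intros Ht. unfold shift, shift_slope, delta.
  apply (is_derive_plus (K := R_AbsRing) (V := R_NormedModule) (fun u => u));
    [apply (is_derive_id (K := R_AbsRing)) |].
  apply (is_derive_minus (K := R_AbsRing) (V := R_NormedModule) (fun u => / (1 - alpha) * F u)).
  - apply is_derive_scal, is_derive_Falpha.
  - apply is_derive_phi, Ht.
Qed.

Lemma shift_slope_ge_1 t : t < xp -> 1 <= shift_slope t.
Proof.
  intros Ht. unfold shift_slope.
  destruct (phi_spec t Ht) as [Hp _].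
  pose proof (Derive_lt_alpha t Ht) as Hu.
  pose proof (Derive_gt_alpha _ Hp) as Hv.
  pose proof (Derive_Ca_le_1 (phi a f alpha t)) as Hv1.
  set (u := Derive f t - alpha) in *.
  set (v := Derive f (phi a f alpha t) - alpha) in *.
  (* [u < 0 < v <= 1 - alpha]: the correction is [(- u) (/ v - / (1 - alpha)) >= 0]. *)
  assert (Hinv : / (1 - alpha) <= / v) by (apply Rinv_le_contravar; unfold v; lra).
  assert (0 <= (- u) * (/ v - / (1 - alpha))) by (apply Rmult_le_pos; unfold u in *; lra).
  unfold Rdiv. nra.
Qed.

Lemma shift_increasing x y : x < y -> y < xp -> shift x < shift y.
Proof.
  intros Hxy Hy. apply (increasing_of_is_derive_pos _ shift_slope); [exact Hxy | |].
  - intros t Ht. apply is_derive_shift. lra.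
  - intros t Ht. pose proof (shift_slope_ge_1 t ltac:(lra)). lra.
Qed.

Lemma shift_le_opp_a t : t <= - a -> shift t = t.
Proof.
  intros Ht. unfold shift, delta. rewrite phi_le_opp_a by exact Ht. ring.
Qed.

Lemma shift_xplus : shift xp = s_alpha a f alpha.
Proof. reflexivity. Qed.

Lemma shift_approaches_s_alpha y : y < s_alpha a f alpha -> exists t, t < xp /\ y < shift t.
Proof.
  intros Hy. set (e := (s_alpha a f alpha - y) / 2).
  assert (He : 0 < e) by (unfold e; lra).
  assert (HFe : F xp < F (xp + e)) by (apply Falpha_increasing; lra).
  assert (Hnear : at_left xp (fun t => t < xp /\ xp - e < t /\ F t < F (xp + e))).
  { unfold at_left, within.
    apply (filter_imp (fun t => xp - e < t /\ F t < F (xp + e))).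
    - intros t Ht Htx. auto.
    - apply filter_and; [apply open_gt; lra |].
      exact (continuous_Falpha xp _ (open_lt _ _ HFe)). }
  destruct (Hierarchy.filter_ex _ Hnear) as [t [Htx [Hte HFt]]].
  exists t. split; [exact Htx |].
  pose proof (phi_lt t (xp + e) Htx ltac:(lra) HFt).
  pose proof (Falpha_decreasing t xp Htx (Rle_refl _)).
  assert (/ (1 - alpha) * F xp < / (1 - alpha) * F t)
    by (apply Rmult_lt_compat_l; [apply Rinv_0_lt_compat |]; lra).
  assert (Hs : s_alpha a f alpha = / (1 - alpha) * F xp)
    by (rewrite <- shift_xplus; unfold shift, delta; rewrite phi_xplus; ring).
  unfold shift, delta. unfold e in *. lra.
Qed.

Lemma continuity_pt_shift t : t < xp -> continuity_pt shift t.
Proof.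
  intros Ht. apply continuity_pt_filterlim.
  apply (ex_derive_continuous (K := R_AbsRing) (V := R_NormedModule)).
  eexists. apply is_derive_shift, Ht.
Qed.

Lemma tau_spec y : y < s_alpha a f alpha ->
  tau a f alpha y < xp /\ shift (tau a f alpha y) = y.
Proof.
  intros Hy.
  destruct (shift_approaches_s_alpha y Hy) as [t1 [Ht1 Hyt1]].
  set (t0 := Rmin (Rmin y (- a)) t1 - 1).
  assert (Ht0 : t0 < t1 /\ t0 <= - a /\ t0 < y).
  { pose proof (Rmin_l (Rmin y (- a)) t1); pose proof (Rmin_r (Rmin y (- a)) t1).
    pose proof (Rmin_l y (- a)); pose proof (Rmin_r y (- a)). unfold t0; lra. }
  assert (Hex : exists z, z <= xp /\ shift z = y).
  { destruct (Ranalysis5.IVT_interv (fun u => shift u - y) t0 t1) as [z [Hz Hsz]].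
    - intros u Hu. apply continuity_pt_minus; [apply continuity_pt_shift; lra |].
      now apply continuity_pt_const.
    - lra.
    - rewrite shift_le_opp_a; lra.
    - lra.
    - exists z. split; lra. }
  destruct (epsilon_spec (inhabits 0) _ Hex) as [Htau Hshift].
  fold (tau a f alpha y) in Htau, Hshift.
  split; [| exact Hshift].
  destruct Htau as [Htau | Htau]; [exact Htau |].
  rewrite Htau, shift_xplus in Hshift. lra.
Qed.

Lemma is_derive_tau y : y < s_alpha a f alpha ->
  is_derive (tau a f alpha) y (/ shift_slope (tau a f alpha y)).
Proof.
  intros Hy.
  set (y' := (y + s_alpha a f alpha) / 2).
  destruct (tau_spec y Hy) as [Ht _].
  destruct (tau_spec (y - 1) ltac:(lra)) as [Hlb Hslb].
  destruct (tau_spec y' ltac:(unfold y'; lra)) as [Hub Hsub].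
  set (lb := tau a f alpha (y - 1)) in *.
  set (ub := tau a f alpha y') in *.
  assert (Hincr : forall u v, u < xp -> v < xp -> u < v -> shift u < shift v)
    by (intros u v _ Hv Huv; now apply shift_increasing).
  assert (Hlub : lb < ub).
  { destruct (le_of_increasing_on (fun u => u < xp) shift lb ub) as [Hlt | Heq]; auto.
    - rewrite Hslb, Hsub. unfold y'. lra.
    - rewrite Heq, Hsub in Hslb. unfold y' in Hslb. lra. }
  apply (is_derive_increasing_inverse shift (tau a f alpha) lb ub).
  - exact Hlub.
  - intros u v _ Hv Huv. apply shift_increasing; lra.
  - intros u Hu. eexists. apply is_derive_shift. lra.
  - intros z Hz. rewrite Hslb, Hsub in Hz.
    destruct (tau_spec z ltac:(unfold y' in Hz; lra)) as [Htz Hstz].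
    repeat split; [| | exact Hstz];
      apply (le_of_increasing_on (fun u => u < xp) shift); auto; lra.
  - rewrite Hslb, Hsub. unfold y'. lra.
  - apply is_derive_shift, Ht.
  - pose proof (shift_slope_ge_1 _ Ht). lra.
Qed.

Lemma is_derive_Sh x : x < s_alpha a f alpha -> is_derive (Sh a f alpha) x
  (alpha + (Derive f (tau a f alpha x) - alpha) / shift_slope (tau a f alpha x)).
Proof.
  intros Hx.
  apply (is_derive_ext_loc (fun y => alpha * y + F (tau a f alpha y))).
  - apply (filter_imp (fun y => y < s_alpha a f alpha)); [| exact (open_lt _ _ Hx)].
    intros y Hy. unfold Sh. destruct (Rle_dec y (s_alpha a f alpha)); [reflexivity | lra].
  - replace (alpha + _) with (alpha * 1 + / shift_slope (tau a f alpha x)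
      * (Derive f (tau a f alpha x) - alpha)) by (unfold Rdiv; ring).
    apply (is_derive_plus (K := R_AbsRing) (V := R_NormedModule) (fun y => alpha * y)).
    + apply is_derive_scal, (is_derive_id (K := R_AbsRing)).
    + apply (is_derive_comp (K := R_AbsRing) (V := R_NormedModule) F).
      * apply is_derive_Falpha.
      * apply is_derive_tau, Hx.
Qed.

End Shadow.
End ClassCa.

Theorem lemma3p20 (a alpha : R) (f : R -> R) :
  0 < a -> 0 <= alpha < 1 -> in_Ca a f ->
  forall x, x < s_alpha a f alpha ->
    ex_derive (Sh a f alpha) x /\ Derive (Sh a f alpha) x < alpha.
Proof.
  intros Ha Halpha Hf x Hx.
  pose proof (is_derive_Sh a f Ha Hf alpha Halpha x Hx) as HSh.
  split; [eexists; exact HSh |].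
  rewrite (is_derive_unique _ _ _ HSh).
  destruct (tau_spec a f Ha Hf alpha Halpha x Hx) as [Htau _].
  pose proof (Derive_lt_alpha a f Ha Hf alpha Halpha _ Htau).
  pose proof (shift_slope_ge_1 a f Ha Hf alpha Halpha _ Htau).
  pose proof (Rdiv_neg_pos (Derive f (tau a f alpha x) - alpha)
    (shift_slope a f alpha (tau a f alpha x)) ltac:(lra) ltac:(lra)).
  lra.
Qed.
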